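(* Let $\lambda\in\mathbb{R}^n$ and $k\le n-1$. Then the vector $v\in\mathbb{R}^n$ with $v_i=e^k_{n-1}(\lambda_{\hat i})$ can be computed using $O(kn\log n)$ arithmetic operations.
   Context: $e^k_m(x_1,\dots,x_m)=\sum_{S\subseteq[m],|S|=k}\prod_{i\in S}x_i$ is the elementary symmetric polynomial, and $\lambda_{\hat i}\in\mathbb{R}^{n-1}$ is the vector obtained from $\lambda$ by deleting its $i$-th entry. *)

From mathcomp Require Import all_boot all_order all_algebra.
From mathcomp Require Import reals.
Set Implicit Arguments. Unset Strict Implicit. Unset Printing Implicit Defensive.
Import Order.TTheory GRing.Theory Num.Theory.
Local Open Scope ring_scope.

Section Defs.
Variable R : realType.

Definition esym (k : nat) (s : seq R) : R :=
  \sum_(S : {set 'I_(size s)} | #|S| == k) \prod_(i in S) s`_i.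

Definition delete_at (i : nat) (s : seq R) : seq R := take i s ++ drop i.+1 s.

(* Straight-line arithmetic programs (algebraic computation model).
   Registers are numbered 0,1,2,... in order of creation; each instruction
   creates one new register.  Loading an input or a real constant is free;
   each +, -, *, / counts as one arithmetic operation. *)
Inductive instr :=
| IInput of nat
| IConst of R
| IAdd of nat & nat
| ISub of nat & nat
| IMul of nat & nat
| IDiv of nat & nat.     (* r_a / r_b  (MathComp's total division, x/0 = 0) *)

Definition step (x : seq R) (regs : seq R) (c : instr) : seq R :=
  let r a := nth 0 regs a in
  rcons regs (match c with
              | IInput j => nth 0 x j
              | IConst v => v
              | IAdd a b => r a + r b
              | ISub a b => r a - r b
              | IMul a b => r a * r b
              | IDiv a b => r a / r b
              end).

Definition run (p : seq instr) (x : seq R) : seq R := foldl (step x) [::] p.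

Definition output (p : seq instr) (outs : seq nat) (x : seq R) : seq R :=
  map (nth 0 (run p x)) outs.

Definition is_arith (c : instr) : bool :=
  match c with IInput _ | IConst _ => false | _ => true end.

Definition arith_cost (p : seq instr) : nat := count is_arith p.

End Defs.

Definition target (R : realType) (k : nat) (lam : seq R) : seq R :=
  [seq esym k (delete_at i lam) | i <- iota 0 (size lam)].

(* Write e_j^(c) for e_j(lam_1, ..., lam_c).  The recursion
   e_(j+1)^(c+1) = e_(j+1)^(c) + lam_(c+1) * e_j^(c) gives every e_j(lam), j <= k,
   with 2kn operations.  The same identity with the i-th variable singled out,
   e_(j+1)(lam) = e_(j+1)(lam_(hat i)) + lam_i * e_j(lam_(hat i)), is then solved
   for e_(j+1)(lam_(hat i)) starting from e_0(lam_(hat i)) = 1, which costs 2k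
   operations per i: 4kn = O(kn log n) operations in total, and no division. *)

From Pilot Require Import Defs.
From mathcomp Require Import all_boot all_order all_algebra.
From mathcomp Require Import reals.
From mathcomp Require Import ring zify.
Set Implicit Arguments. Unset Strict Implicit. Unset Printing Implicit Defensive.
Import GRing.Theory.
Local Open Scope ring_scope.

Section SetCons.
Variable n : nat.

Definition set_cons (b : bool) (T : {set 'I_n}) : {set 'I_n.+1} :=
  [set i | if unlift ord0 i is Some j then j \in T else b].

Lemma set_cons0 b T : (ord0 \in set_cons b T) = b.
Proof. by rewrite inE unlift_none. Qed.

Lemma set_cons_lift b T j : (lift ord0 j \in set_cons b T) = (j \in T).
Proof. by rewrite inE liftK. Qed.

Lemma set_cons_bij : bijective (fun p : bool * {set 'I_n} => set_cons p.1 p.2).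
Proof.
exists (fun S : {set 'I_n.+1} => (ord0 \in S, [set j | lift ord0 j \in S])).
  by case=> b T; rewrite set_cons0; congr (_, _); apply/setP => j; rewrite inE set_cons_lift.
move=> S /=; apply/setP => i; rewrite inE.
by case: unliftP => [j ->|->]; rewrite ?inE.
Qed.

Lemma big_set_cons (R : Type) (idx : R) (op : Monoid.com_law idx) b T (F : 'I_n.+1 -> R) :
  \big[op/idx]_(i in set_cons b T) F i =
  op (if b then F ord0 else idx) (\big[op/idx]_(j in T) F (lift ord0 j)).
Proof.
rewrite big_mkcond big_ord_recl set_cons0 [in RHS]big_mkcond.
by congr (op _ _); apply: eq_bigr => j _; rewrite set_cons_lift.
Qed.

Lemma card_set_cons b T : #|set_cons b T| = (b + #|T|)%N.
Proof. by rewrite -!sum1_card big_set_cons; case: b. Qed.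

End SetCons.

Section ElementarySymmetric.
(* Plain [esym] would resolve to ssrfun's symmetry of equality. *)
Variable R : realType.
Implicit Types (s : seq R) (x : R).

Lemma esym0 s : Defs.esym 0%N s = 1.
Proof.
rewrite /Defs.esym (big_pred1 set0) ?big_set0 // => S /=.
by rewrite cards_eq0.
Qed.

Lemma esym_nil k : Defs.esym k.+1 ([::] : seq R) = 0.
Proof.
rewrite /Defs.esym big_pred0 // => S.
by rewrite (_ : S = set0) ?cards0 //; apply/setP => -[].
Qed.

Lemma esym_cons k x s : Defs.esym k.+1 (x :: s) = Defs.esym k.+1 s + x * Defs.esym k s.
Proof.
rewrite /Defs.esym (reindex _ (onW_bij _ (set_cons_bij _))) /=.
under eq_bigl do rewrite card_set_cons.
under eq_bigr do rewrite big_set_cons.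
rewrite -(pair_big_dep xpredT (fun (b : bool) (T : {set _}) => b + #|T| == k.+1)%N
            (fun b T => (if b then x else 1) * \prod_(j in T) (x :: s)`_(lift ord0 j))).
rewrite big_bool /= addrC mulr_sumr.
by congr (_ + _); apply: eq_bigr => T _; rewrite mul1r.
Qed.

Lemma esym_delete_at k s i : (i < size s)%N ->
  Defs.esym k.+1 s = Defs.esym k.+1 (delete_at i s) + s`_i * Defs.esym k (delete_at i s).
Proof.
elim: s i k => [|x t IH] [|i] k //= lt_i_t; first by rewrite /delete_at /= drop0 esym_cons.
have -> : delete_at i.+1 (x :: t) = x :: delete_at i t by [].
rewrite !esym_cons (IH i k lt_i_t).
case: k => [|k]; first by rewrite !esym0; ring.
by rewrite (IH i k lt_i_t) esym_cons; ring.
Qed.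

Lemma esym_rcons k s x : Defs.esym k.+1 (rcons s x) = Defs.esym k.+1 s + x * Defs.esym k s.
Proof.
have del_last : delete_at (size s) (rcons s x) = s.
  by rewrite /delete_at -cats1 take_size_cat // drop_oversize ?cats0 // size_cat /= addn1.
by rewrite (@esym_delete_at _ _ (size s)) ?size_rcons // del_last nth_rcons ltnn eqxx.
Qed.

End ElementarySymmetric.

Section SeqIndexing.
Variables (T : Type) (d : T).

Lemma nth_cat_lt (s1 s2 : seq T) i : (i < size s1)%N -> nth d (s1 ++ s2) i = nth d s1 i.
Proof. by move=> lt_i; rewrite nth_cat lt_i. Qed.

Lemma nth_cat_add (s1 s2 : seq T) i : nth d (s1 ++ s2) (size s1 + i) = nth d s2 i.
Proof. by rewrite nth_cat ltnNge leq_addr addKn. Qed.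

Variables (f : nat -> seq T) (b : nat).

Lemma count_flatten_mkseq (a : pred T) N :
  (forall q, count a (f q) = b) -> count a (flatten (mkseq f N)) = (b * N)%N.
Proof.
move=> count_f; elim: N => [|N IH]; first by rewrite muln0.
by rewrite mkseqS -cats1 flatten_cat count_cat IH /= cats0 count_f mulnS addnC.
Qed.

Hypothesis size_f : forall q, size (f q) = b.

Lemma size_flatten_mkseq N : size (flatten (mkseq f N)) = (b * N)%N.
Proof. by rewrite -count_predT count_flatten_mkseq // => q; rewrite count_predT. Qed.

Lemma nth_flatten_mkseq N q r : (q < N)%N -> (r < b)%N ->
  nth d (flatten (mkseq f N)) (b * q + r) = nth d (f q) r.
Proof.
move=> + lt_r_b; elim: N => // N IH lt_q_N.
rewrite mkseqS -cats1 flatten_cat /= cats0.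
case: (ltnP q N) => [lt_q | ge_q]; last have -> : q = N by lia.
  by rewrite nth_cat_lt ?IH // size_flatten_mkseq; nia.
by rewrite -(size_flatten_mkseq N) nth_cat_add.
Qed.

End SeqIndexing.

Section Semantics.
Variables (R : realType) (x : seq R).

Definition eval (regs : seq R) (c : instr R) : R :=
  let r a := nth 0 regs a in
  match c with
  | IInput j => nth 0 x j
  | IConst v => v
  | IAdd a b => r a + r b
  | ISub a b => r a - r b
  | IMul a b => r a * r b
  | IDiv a b => r a / r b
  end.

Definition reads_before (m : nat) (c : instr R) : bool :=
  match c with
  | IInput _ | IConst _ => true
  | IAdd a b | ISub a b | IMul a b | IDiv a b => (a < m)%N && (b < m)%N
  end.

Lemma eval_take m regs c : reads_before m c -> eval (take m regs) c = eval regs c.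
Proof. by case: c => //= a b /andP[lt_a lt_b]; rewrite !nth_take. Qed.

Lemma run_rcons p c : run (rcons p c) x = rcons (run p x) (eval (run p x) c).
Proof. by rewrite /run foldl_rcons. Qed.

Lemma size_run p : size (run p x) = size p.
Proof. by elim/last_ind: p => // p c IH; rewrite run_rcons !size_rcons IH. Qed.

Lemma take_run p m : take m (run p x) = run (take m p) x.
Proof.
elim/last_ind: p => [|p c IH]; first by case: m.
rewrite run_rcons -!cats1 !take_cat size_run.
case: ltnP => // _; case: (m - size p)%N => [|j] /=; first by rewrite !cats0.
by rewrite !cats1 run_rcons.
Qed.

Lemma nth_run p m c : (m < size p)%N -> nth (IConst 0) p m = c -> reads_before m c ->
  nth 0 (run p x) m = eval (run p x) c.
Proof.
move=> lt_m instr_m reads; rewrite -(eval_take _ reads) -(nth_take 0 (ltnSn m)) !take_run.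
by rewrite (take_nth (IConst 0) lt_m) run_rcons
  nth_rcons size_run size_take lt_m ltnn eqxx instr_m.
Qed.

End Semantics.

Section MacBlock.
Variables (R : realType) (op : nat -> nat -> instr R) (a : nat) (b c : nat -> nat).

(* [base] is meant to be the position of the block in the program, so that
   the [t]-th [op] instruction reads the product computed just before it. *)
Definition mac_block (base len : nat) : seq (instr R) :=
  flatten (mkseq (fun t => [:: IMul R a (b t); op (c t) (base + 2 * t)%N]) len).

Lemma size_mac_block base len : size (mac_block base len) = (2 * len)%N.
Proof. exact: size_flatten_mkseq. Qed.

Lemma nth_mac_block_mul d base len t : (t < len)%N ->
  nth d (mac_block base len) (2 * t) = IMul R a (b t).
Proof. by move=> lt_t; rewrite -[(2 * t)%N]addn0 nth_flatten_mkseq. Qed.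

Lemma nth_mac_block_op d base len t : (t < len)%N ->
  nth d (mac_block base len) (2 * t).+1 = op (c t) (base + 2 * t).
Proof. by move=> lt_t; rewrite -addn1 nth_flatten_mkseq. Qed.

End MacBlock.

Section Program.
Variables (R : realType) (n k : nat).

(* Registers [0..n-1] hold the inputs, [n] and [n+1] the constants 1 and 0;
   [prefix_reg c j] holds e_j(lam_1, ..., lam_c) and [delete_reg i j] holds
   e_j(lam with its i-th entry deleted), both for [j <= k]. *)
Definition prefix_base (c : nat) : nat := (n.+2 + 2 * k * c)%N.
Definition delete_base (i : nat) : nat := (prefix_base n + 2 * k * i)%N.

Definition prefix_reg (c j : nat) : nat :=
  match j, c with
  | 0, _ => n
  | _.+1, 0 => n.+1
  | t.+1, c.+1 => (prefix_base c + 2 * t).+1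
  end.

Definition delete_reg (i j : nat) : nat :=
  if j is t.+1 then (delete_base i + 2 * t).+1 else n.

Definition prefix_stage (c : nat) : seq (instr R) :=
  mac_block (IAdd R) c (prefix_reg c) (fun t => prefix_reg c t.+1) (prefix_base c) k.

Definition delete_stage (i : nat) : seq (instr R) :=
  mac_block (ISub R) i (delete_reg i) (fun t => prefix_reg n t.+1) (delete_base i) k.

Definition esym_prelude : seq (instr R) := mkseq (IInput R) n ++ [:: IConst 1; IConst 0].

Definition esym_prog : seq (instr R) :=
  esym_prelude ++ flatten (mkseq prefix_stage n) ++ flatten (mkseq delete_stage n).

Definition esym_outs : seq nat := mkseq (fun i => delete_reg i k) n.

Lemma size_esym_prelude : size esym_prelude = n.+2.
Proof. by rewrite size_cat size_mkseq addn2. Qed.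

Lemma size_prefix_phase : size (flatten (mkseq prefix_stage n)) = (2 * k * n)%N.
Proof. by apply: size_flatten_mkseq => c; rewrite size_mac_block. Qed.

Lemma size_esym_prog : size esym_prog = (delete_base n).
Proof.
rewrite size_cat size_esym_prelude size_cat size_prefix_phase.
rewrite (size_flatten_mkseq (b := 2 * k)) => [|i]; last by rewrite size_mac_block.
by rewrite /delete_base /prefix_base addnA.
Qed.

Lemma arith_cost_esym_prog : arith_cost esym_prog = (4 * k * n)%N.
Proof.
have count_stage (op : nat -> nat -> instr R) a b c base : (forall u v, is_arith (op u v)) ->
    count (@is_arith R) (mac_block op a b c base k) = (2 * k)%N.
  by move=> op_arith; apply: count_flatten_mkseq => t /=; rewrite op_arith.
rewrite /arith_cost !count_cat !(count_flatten_mkseq (b := 2 * k)) //; last first.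
- by move=> i; exact: count_stage.
- by move=> c; exact: count_stage.
by rewrite count_map (@eq_count _ _ pred0) // count_pred0 /=; nia.
Qed.

Lemma nth_esym_prog_prefix d c j : (c < n)%N -> (j < 2 * k)%N ->
  nth d esym_prog (prefix_base c + j) = nth d (prefix_stage c) j.
Proof.
move=> lt_c lt_j; rewrite /prefix_base -size_esym_prelude -addnA nth_cat_add.
rewrite nth_cat_lt ?size_prefix_phase; last by nia.
by rewrite nth_flatten_mkseq // => q; rewrite size_mac_block.
Qed.

Lemma nth_esym_prog_delete d i j : (i < n)%N -> (j < 2 * k)%N ->
  nth d esym_prog (delete_base i + j) = nth d (delete_stage i) j.
Proof.
move=> lt_i lt_j; rewrite /delete_base /prefix_base -size_esym_prelude -!addnA nth_cat_add.
rewrite -size_prefix_phase nth_cat_add.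
by rewrite nth_flatten_mkseq // => q; rewrite size_mac_block.
Qed.

Lemma prefix_reg_lt c j : (j <= k)%N -> (prefix_reg c j < prefix_base c)%N.
Proof. by case: j c => [|j] [|c] /= le_j; rewrite /prefix_base; nia. Qed.

Lemma delete_reg_lt i t : (delete_reg i t < delete_base i + 2 * t)%N.
Proof. by case: t => [|t] /=; rewrite /delete_base /prefix_base; nia. Qed.

Lemma nth_esym_prog_prefix_mul d c t : (c < n)%N -> (t < k)%N ->
  nth d esym_prog (prefix_base c + 2 * t) = IMul R c (prefix_reg c t).
Proof. by move=> lt_c lt_t; rewrite nth_esym_prog_prefix ?nth_mac_block_mul //; lia. Qed.

Lemma nth_esym_prog_prefix_add d c t : (c < n)%N -> (t < k)%N ->
  nth d esym_prog (prefix_base c + 2 * t).+1 =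
  IAdd R (prefix_reg c t.+1) (prefix_base c + 2 * t).
Proof. by move=> lt_c lt_t; rewrite -addnS nth_esym_prog_prefix ?nth_mac_block_op //; lia. Qed.

Lemma nth_esym_prog_delete_mul d i t : (i < n)%N -> (t < k)%N ->
  nth d esym_prog (delete_base i + 2 * t) = IMul R i (delete_reg i t).
Proof. by move=> lt_i lt_t; rewrite nth_esym_prog_delete ?nth_mac_block_mul //; lia. Qed.

Lemma nth_esym_prog_delete_sub d i t : (i < n)%N -> (t < k)%N ->
  nth d esym_prog (delete_base i + 2 * t).+1 =
  ISub R (prefix_reg n t.+1) (delete_base i + 2 * t).
Proof. by move=> lt_i lt_t; rewrite -addnS nth_esym_prog_delete ?nth_mac_block_op //; lia. Qed.

End Program.

Section Correctness.
Variables (R : realType) (k : nat) (lam : seq R).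
Local Notation n := (size lam).
Local Notation r := (run (esym_prog R n k) lam).

Lemma run_input i : (i < n)%N -> nth 0 r i = lam`_i.
Proof.
move=> lt_i; have lt_i_prog : (i < size (esym_prog R n k))%N.
  by rewrite size_esym_prog /delete_base /prefix_base; lia.
have instr_i : nth (IConst 0) (esym_prog R n k) i = IInput R i.
  by rewrite nth_cat_lt ?size_esym_prelude 1?nth_cat_lt ?size_mkseq ?nth_mkseq //; lia.
by rewrite (nth_run _ lt_i_prog instr_i).
Qed.

Lemma run_one : nth 0 r n = 1.
Proof.
have instr_n : nth (IConst 0) (esym_prog R n k) n = IConst 1.
  by rewrite nth_cat_lt ?size_esym_prelude // nth_cat size_mkseq ltnn subnn.
by rewrite (nth_run _ _ instr_n) // size_esym_prog /delete_base /prefix_base; lia.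
Qed.

Lemma run_zero : nth 0 r n.+1 = 0.
Proof.
have instr_n : nth (IConst 0) (esym_prog R n k) n.+1 = IConst 0.
  by rewrite nth_cat_lt ?size_esym_prelude // nth_cat size_mkseq ltnNge leqnSn subSnn.
by rewrite (nth_run _ _ instr_n) // size_esym_prog /delete_base /prefix_base; lia.
Qed.

Lemma run_prefix_step c t : (c < n)%N -> (t < k)%N ->
  nth 0 r (prefix_reg n k c.+1 t.+1) =
  nth 0 r (prefix_reg n k c t.+1) + lam`_c * nth 0 r (prefix_reg n k c t).
Proof.
move=> lt_c lt_t; set m := (prefix_base n k c + 2 * t)%N.
have lt_m : (m.+1 < size (esym_prog R n k))%N.
  by rewrite size_esym_prog /m /delete_base /prefix_base; nia.
have lt_reg j : (j <= k)%N -> (prefix_reg n k c j < m)%N.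
  by move=> le_j; have := prefix_reg_lt n c le_j; rewrite /m; lia.
rewrite (_ : prefix_reg n k c.+1 t.+1 = m.+1) //.
rewrite (nth_run _ lt_m (nth_esym_prog_prefix_add _ lt_c lt_t)); last first.
  by cbn [reads_before]; have := lt_reg _ lt_t; lia.
cbn [eval]; rewrite (nth_run _ (ltnW lt_m) (nth_esym_prog_prefix_mul _ lt_c lt_t)).
  by cbn [eval]; rewrite (run_input lt_c).
by cbn [reads_before]; have := lt_reg _ (ltnW lt_t); rewrite /m /prefix_base; lia.
Qed.

Lemma run_delete_step i t : (i < n)%N -> (t < k)%N ->
  nth 0 r (delete_reg n k i t.+1) =
  nth 0 r (prefix_reg n k n t.+1) - lam`_i * nth 0 r (delete_reg n k i t).
Proof.
move=> lt_i lt_t; set m := (delete_base n k i + 2 * t)%N.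
have lt_m : (m.+1 < size (esym_prog R n k))%N.
  by rewrite size_esym_prog /m /delete_base /prefix_base; nia.
have lt_prefix : (prefix_reg n k n t.+1 < m)%N.
  by have := prefix_reg_lt n n lt_t; rewrite /m /delete_base; lia.
rewrite (_ : delete_reg n k i t.+1 = m.+1) //.
rewrite (nth_run _ lt_m (nth_esym_prog_delete_sub _ lt_i lt_t)); last first.
  by cbn [reads_before]; lia.
cbn [eval]; rewrite (nth_run _ (ltnW lt_m) (nth_esym_prog_delete_mul _ lt_i lt_t)).
  by cbn [eval]; rewrite (run_input lt_i).
by cbn [reads_before]; have := delete_reg_lt n k i t; rewrite /m /delete_base /prefix_base; lia.
Qed.

Lemma run_prefix_reg c j : (c <= n)%N -> (j <= k)%N ->
  nth 0 r (prefix_reg n k c j) = Defs.esym j (take c lam).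
Proof.
elim: c j => [|c IH] [|j] le_c le_j; rewrite ?esym0 ?run_one //.
  by rewrite take0 esym_nil run_zero.
rewrite run_prefix_step // !IH ?(ltnW le_c) ?(ltnW le_j) //.
by rewrite (take_nth 0 le_c) esym_rcons.
Qed.

Lemma run_delete_reg i j : (i < n)%N -> (j <= k)%N ->
  nth 0 r (delete_reg n k i j) = Defs.esym j (delete_at i lam).
Proof.
move=> lt_i; elim: j => [|j IH] le_j; first by rewrite esym0 run_one.
rewrite run_delete_step // IH 1?ltnW // run_prefix_reg // take_size.
by rewrite (esym_delete_at j lt_i) addrK.
Qed.

Lemma esym_prog_correct : output (esym_prog R n k) (esym_outs n k) lam = target k lam.
Proof.
rewrite /output /target /esym_outs /mkseq -map_comp; apply/eq_in_map => i.
by rewrite mem_iota => /andP[_ lt_i]; exact: run_delete_reg.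
Qed.

End Correctness.

Theorem mainTheorem15 (R : realType) :
  exists C N : nat, forall n k : nat, (N <= n)%N -> (k <= n.-1)%N ->
    exists (p : seq (instr R)) (outs : seq nat),
      (arith_cost p <= C * k * n * up_log 2 n)%N /\
      forall lam : seq R, size lam = n -> output p outs lam = target k lam.
Proof.
exists 4%N, 2%N => n k le_2_n _.
exists (esym_prog R n k), (esym_outs n k); split.
  by rewrite arith_cost_esym_prog leq_pmulr // up_log_gt0; lia.
by move=> lam <-; exact: esym_prog_correct.
Qed.
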